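(* Let $\mathbf{F}_{\Phi}$ be a fence over the Cantor space $X$, let $H_X:X\to X$ be a continuous surjection and let $T:\mathbf{F}_\Phi\to\mathbf{F}_\Phi$ be a continuous lifting of $H_X$ such that for every $x\in X$ the restriction of $T$ to the fiber $\{x\}\times\mathbf{F}_\Phi(x)$ is a homeomorphism (onto its image). Then the topological entropies satisfy $\mathrm{ent}(T)=\mathrm{ent}(H_X)$.
   Context: For $\Phi=(\varphi^L,\varphi^U)$ with $\varphi^L,\varphi^U:X\to[0,1]$, $\varphi^L$ lower semicontinuous, $\varphi^U$ upper semicontinuous, $\varphi^L\le\varphi^U$, the fence is $\mathbf{F}_\Phi=\{(x,t)\in X\times[0,1]:\varphi^L(x)\le t\le\varphi^U(x)\}$ and $\mathbf{F}_\Phi(x)=\{t:(x,t)\in\mathbf{F}_\Phi\}$. A map $T:\mathbf{F}_\Phi\to\mathbf{F}_\Phi$ is a lifting of $H_X:X\to X$ if $T(x,t)=(H_X(x),s)$ for some $s\in\mathbf{F}_\Phi(H_X(x))$, for every $(x,t)\in\mathbf{F}_\Phi$. *)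

From HB Require Import structures.
From mathcomp Require Import all_boot all_order all_algebra.
From mathcomp Require Import all_classical all_reals all_analysis.
Set Implicit Arguments. Unset Strict Implicit. Unset Printing Implicit Defensive.
Import Order.TTheory GRing.Theory Num.Theory.
Import numFieldNormedType.Exports.
Local Open Scope classical_set_scope.
Local Open Scope ring_scope.

Definition lsc {R : realType} {X : topologicalType} (f : X -> R) :=
  forall x (a : R), a < f x -> exists2 V, nbhs x V & forall y, V y -> a < f y.
Definition usc {R : realType} {X : topologicalType} (f : X -> R) :=
  forall x (a : R), f x < a -> exists2 V, nbhs x V & forall y, V y -> f y < a.

(* The fence F_Phi = {(x,t) in X x [0,1] : phiL x <= t <= phiU x},
   seen as a subset of X * R (with the subspace topology). *)
Definition fence {R : realType} {X : Type} (phiL phiU : X -> R) : set (X * R) :=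
  [set p | phiL p.1 <= p.2 /\ p.2 <= phiU p.1].

(* Entropy of the restriction of T : Y -> Y to a T-invariant compact set K.
   A (finite) open cover of K is a family U : 'I_k -> set Y of open sets of Y
   whose union contains K (relatively open subsets of K are exactly the
   traces of open subsets of Y). *)

(* element of the join U v T^-1 U v ... v T^-(n-1) U indexed by a word w *)
Definition join_set {Y : Type} (T : Y -> Y) {k : nat} (U : 'I_k -> set Y)
  (n : nat) (w : {ffun 'I_n -> 'I_k}) : set Y :=
  [set y | forall i : 'I_n, U (w i) (iter i T y)].

Definition cover_number {R : realType} {Y : Type} (K : set Y) (T : Y -> Y)
  {k : nat} (U : 'I_k -> set Y) (n : nat) : R :=
  inf [set (#|W|%:R : R) | W in
        [set W : {set {ffun 'I_n -> 'I_k}} |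
          K `<=` [set y | exists2 w, w \in W & join_set T U w y]]].

(* h(T, U) = lim_n (1/n) log N(U v ... v T^-(n-1) U)  (limit = limsup) *)
Definition cover_entropy {R : realType} {Y : Type} (K : set Y) (T : Y -> Y)
  {k : nat} (U : 'I_k -> set Y) : \bar R :=
  limn_esup (fun n => ((ln (cover_number (R:=R) K T U n)) / n%:R)%:E).

Definition top_entropy {R : realType} {Y : topologicalType} (K : set Y)
  (T : Y -> Y) : \bar R :=
  ereal_sup [set e | exists (k : nat) (U : 'I_k -> set Y),
      [/\ (forall i, open (U i)), K `<=` \bigcup_i U i &
          e = cover_entropy (R:=R) K T U]].

(* The projection (x, t) |-> x maps the fence onto X and semiconjugates T to
   HX, so ent(HX) <= ent(T).  Conversely, T is monotone on each fibre, being
   continuous and injective on an interval, hence so are its iterates.  Cut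
   the second coordinate into L + 1 cells finer than a vertical Lebesgue
   number of an open cover V: the V-itineraries of length m of the points of
   one fibre are then given by m monotone sequences of cells, so there are at
   most m L + 1 of them.  By the tube lemma this linear bound holds over a
   neighbourhood of each fibre, and cutting orbits into blocks of length m
   gives N(V, n) <= N(U, n) (m L + 1)^(n/m + 1) for a finite open cover U of
   X.  Thus h(T, V) <= h(HX, U) + ln(m L + 1) / m, and the last term is
   arbitrarily small. *)

From HB Require Import structures.
From mathcomp Require Import all_boot all_order all_algebra.
From mathcomp Require Import all_classical all_reals all_analysis.
From mathcomp Require Import lra zify.
Import Order.TTheory GRing.Theory Num.Theory.
Import numFieldNormedType.Exports.
Local Open Scope classical_set_scope.
Local Open Scope ring_scope.

Lemma iter_invariant {Y} {K : set Y} {T : Y -> Y} (T_K : forall y, K y -> K (T y)) i {y} :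
  K y -> K (iter i T y).
Proof. by move=> Ky; elim: i => //= i; exact: T_K. Qed.

Definition join_cover {Y} (K : set Y) (T : Y -> Y) {k} (U : 'I_k -> set Y) n :
    set {set {ffun 'I_n -> 'I_k}} :=
  [set W | K `<=` [set y | exists2 w, w \in W & join_set T U w y]].

Section CoverNumber.
Context {R : realType} {Y : Type} {K : set Y} {T : Y -> Y}.

Lemma cover_number_le {k} {U : 'I_k -> set Y} {n W} :
  join_cover K T U n W -> cover_number (R:=R) K T U n <= #|W|%:R.
Proof.
move=> UW; apply: ge_inf; last by exists W.
by exists 0 => _ [W' _ <-]; exact: ler0n.
Qed.

Lemma cover_number_ge {k} (U : 'I_k -> set Y) n (a : R) :
  (exists W, join_cover K T U n W) -> (forall W, join_cover K T U n W -> a <= #|W|%:R) ->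
  a <= cover_number K T U n.
Proof.
move=> [W UW] aW; apply: lb_le_inf; first by exists #|W|%:R, W.
by move=> _ [W' UW' <-]; exact: aW.
Qed.

Hypothesis T_K : forall y, K y -> K (T y).

Lemma join_cover_setT {k} (U : 'I_k -> set Y) n :
  K `<=` \bigcup_j U j -> join_cover K T U n [set: {ffun 'I_n -> 'I_k}]%SET.
Proof.
move=> KU y Ky.
have /choice[w wP] : forall i : 'I_n, exists j, U j (iter i T y).
  by move=> i; have [j _ Uj] := KU _ (iter_invariant T_K i Ky); exists j.
by exists [ffun i => w i]; rewrite ?inE // => i; rewrite ffunE.
Qed.

Lemma cover_number_ge1 {k} (U : 'I_k -> set Y) n {y0} :
  K y0 -> K `<=` \bigcup_j U j -> 1 <= cover_number (R:=R) K T U n.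
Proof.
move=> Ky0 KU; apply: cover_number_ge; first by eexists; exact: join_cover_setT.
move=> W UW; have [w wW _] := UW y0 Ky0.
by rewrite ler1n card_gt0; apply/set0Pn; exists w.
Qed.

End CoverNumber.

Lemma limn_esup_le_add (R : realType) (u v : (\bar R)^nat) (c : R) :
  (\forall n \near \oo, (u n <= v n + c%:E)%E) ->
  (limn_esup u <= limn_esup v + c%:E)%E.
Proof.
move=> [N _ uv]; rewrite !limn_esup_lim.
have vc : (fun n => esups v n + c%:E)%E @ \oo --> (limn (esups v) + c%:E)%E.
  by apply: cvgeD; [exact: fin_num_adde_defl|exact: is_cvg_esups|exact: cvg_cst].
rewrite -(cvg_lim _ vc) //; apply: lee_lim; [exact: is_cvg_esups|exact: cvgP vc|].
exists N => // n /= Nn; apply: ge_ereal_sup => _ [k /= nk <-].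
apply: le_trans (uv k (leq_trans Nn nk)) _; rewrite leeD2r //.
by apply: ereal_sup_ubound; exists k.
Qed.

Lemma exists_ln_affine_le {R : realType} (L : nat) {eta : R} : 0 < eta ->
  exists2 m : nat, (0 < m)%N & ln ((m * L + 1)%:R : R) <= eta * m%:R.
Proof.
(* [m] is chosen so that [m L + 1 <= 1 + (eta m)^2 / 2 <= expR (eta m)]. *)
move=> eta0; pose m := (Num.truncn (2 * L%:R / eta ^+ 2)).+1.
exists m => //.
have eta20 : 0 < eta ^+ 2 by rewrite exprn_gt0.
have : 2 * L%:R < m%:R * eta ^+ 2 by rewrite -ltr_pdivrMr // truncnS_gt.
rewrite -[leRHS]expRK ler_ln ?posrE ?expR_gt0 ?ltr0n ?addn1 // => mL.
apply: le_trans (expR_ge1Dxn 1 (mulr_ge0 (ltW eta0) (ler0n _ _))).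
rewrite -addn1 natrD natrM addrC lerD2l (_ : 2`!%:R = 2 :> R) //.
rewrite ler_pdivlMr // exprMn.
have L0 : 0 <= L%:R :> R := ler0n _ _.
have m0 : 0 <= m%:R :> R := ler0n _ _.
clearbody m.
nra.
Qed.

Definition monotone_on {d d'} {T : porderType d} {T' : porderType d'} {pT : predType T}
  (A : pT) (f : T -> T') :=
  {in A &, {homo f : s t / (s <= t)%O >-> (s <= t)%O}} \/
  {in A &, {homo f : s t / (s <= t)%O >-> (t <= s)%O}}.

Lemma monotone_on_comp {d d' d''} {T : porderType d} {T' : porderType d'}
    {T'' : porderType d''} {pT : predType T} {pT' : predType T'} {A : pT} {B : pT'}
    {f : T -> T'} {g : T' -> T''} :
  {in A, forall t, f t \in B} -> monotone_on A f -> monotone_on B g ->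
  monotone_on A (g \o f).
Proof.
move=> fAB [] f_mono [] g_mono; [left|right|right|left] => s t As At st /=;
  by apply: g_mono; rewrite ?fAB //; exact: f_mono.
Qed.

Lemma monotone_on_eq {d d'} {T : porderType d} {T' : porderType d'} {pT : predType T}
    {A : pT} {f g : T -> T'} :
  {in A, f =1 g} -> monotone_on A g -> monotone_on A f.
Proof.
by move=> fg [] g_mono; [left|right] => s t As At st; rewrite !fg //; exact: g_mono.
Qed.

(* Normalising every profile entry to be nondecreasing, the sum of the entries
   is a nondecreasing function of [t] which determines the profile. *)
Lemma monotone_profiles_count {d} {T : orderType d} {pT : predType T} (A : pT) (m L : nat)
    (g : 'I_m -> T -> nat) :
  (forall j, monotone_on A (g j)) -> (forall j, {in A, forall t, g j t <= L})%N ->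
  exists2 s : seq {ffun 'I_m -> nat}, (size s <= m * L + 1)%N &
    {in A, forall t, [ffun j => g j t] \in s}.
Proof.
move=> g_mono gL.
have /choice[up upP] : forall j, exists b : bool, {in A &, forall s t, (s <= t)%O ->
    if b then (g j s <= g j t)%N else (g j t <= g j s)%N}.
  by move=> j; case: (g_mono j) => h; [exists true|exists false].
pose lvl j t := if up j then g j t else (L - g j t)%N.
have lvl_mono j s t : s \in A -> t \in A -> (s <= t)%O -> (lvl j s <= lvl j t)%N.
  move=> As At st; have := upP j s t As At st.
  by rewrite /lvl; case: (up j) => // ?; exact: leq_sub2l.
pose Phi t := (\sum_(j < m) lvl j t)%N.
have Phi_le t : t \in A -> (Phi t <= m * L)%N.
  move=> At; rewrite -[m in (_ <= m * _)%N]card_ord -sum_nat_const.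
  by apply: leq_sum => j _; rewrite /lvl; case: (up j); rewrite ?gL ?leq_subr.
have Phi_inj s t : s \in A -> t \in A -> Phi s = Phi t ->
    [ffun j => g j s] = [ffun j => g j t].
  wlog st : s t / (s <= t)%O.
    move=> wlog As At; case: (leP s t) => [|/ltW] st; first exact: wlog.
    by move/esym/(wlog t s st At As)->.
  move=> As At /eqP; rewrite (leqif_sum (fun j _ => leqif_eq (lvl_mono j s t As At st))).
  move=> /forallP lvl_eq; apply/ffunP => j; rewrite !ffunE.
  have := gL j s As; have := gL j t At; have := lvl_eq j.
  by rewrite /lvl; case: (up j) => /eqP; lia.
have /choice[pick pickP] : forall v : nat, exists o : option {ffun 'I_m -> nat},
    {in A, forall t, Phi t = v -> o = Some [ffun j => g j t]}.
  move=> v; case: (pselect (exists2 t, t \in A & Phi t = v)) => [[t At <-]|no].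
    by exists (Some [ffun j => g j t]) => t' At' /esym/Phi_inj-> .
  by exists None => t At Pt; case: no; exists t.
exists (pmap pick (iota 0 (m * L + 1))).
  by rewrite size_pmap (leq_trans (count_size _ _)) ?size_iota.
move=> t At; rewrite mem_pmap -(pickP _ t At erefl); apply: map_f.
by rewrite mem_iota add0n addn1 ltnS Phi_le.
Qed.

(** * Entropy of extensions *)

Section Extension.
Context {R : realType} {X Y : topologicalType} {K : set Y} {T : Y -> Y}.
Context {H : X -> X} {pr : Y -> X}.
Hypotheses (T_K : forall p, K p -> K (T p)) (pr_T : forall p, K p -> pr (T p) = H (pr p)).

Lemma pr_iter i {p} : K p -> pr (iter i T p) = iter i H (pr p).
Proof.
by move=> Kp; elim: i => //= i IH; rewrite pr_T ?IH //; exact: iter_invariant.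
Qed.

Hypothesis T_cont : {within K, continuous T}.

Lemma T_nbhs {p B} : K p -> nbhs (T p) B -> nbhs p [set q | K q -> B (T q)].
Proof. by move=> Kp; move/subspace_continuousP : T_cont => /(_ p Kp); apply. Qed.

Lemma iter_nbhs i p B : open B -> K p -> B (iter i T p) ->
  nbhs p [set q | K q -> B (iter i T q)].
Proof.
move=> Bo; elim: i p => [|i IH] p Kp.
  by move=> Bp; apply: filterS (open_nbhs_nbhs (conj Bo Bp)) => q Bq _.
rewrite iterSr => /(IH _ (T_K _ Kp))/(T_nbhs Kp); apply: filterS => q KTq Kq.
by rewrite iterSr; exact: KTq (T_K _ Kq).
Qed.

Lemma join_set_nbhs {k m} {V : 'I_k -> set Y} {w : {ffun 'I_m -> 'I_k}} {p} :
  (forall i, open (V i)) -> K p -> join_set T V w p ->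
  nbhs p [set q | K q -> join_set T V w q].
Proof.
move=> Vo Kp pw; have : \forall q \near p, forall i : 'I_m, K q -> V (w i) (iter i T q).
  by apply: filter_forall => i; exact: iter_nbhs (Vo _) Kp (pw i).
by apply: filterS => q qw Kq i; exact: qw.
Qed.

Section Concatenation.
Context {k : nat} {V : 'I_k -> set Y} {m r c : nat} {U : 'I_r -> set X}.
Context {Wj : 'I_r -> {set {ffun 'I_m -> 'I_k}}}.
Hypotheses (k0 : (0 < k)%N) (m0 : (0 < m)%N) (c0 : (0 < c)%N).
Hypotheses (Wj_card : forall j, (#|Wj j| <= c)%N)
  (Wj_cover : forall j, join_cover (K `&` pr @^-1` U j) T V m (Wj j)).

(* A word of length [n] is made of blocks of length [m]: the block starting at
   time [l m] is the member of [Wj j] numbered by [v l], where [U j] contains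
   the projection of the orbit at time [l m]. *)
Lemma join_cover_concat {n} {WH : {set {ffun 'I_n -> 'I_r}}} :
  join_cover [set: X] H U n WH ->
  exists2 WT : {set {ffun 'I_n -> 'I_k}},
    (#|WT| <= #|WH| * c ^ (n %/ m).+1)%N & join_cover K T V n WT.
Proof.
move=> XWH; pose w0 : {ffun 'I_m -> 'I_k} := [ffun => Ordinal k0].
pose code j (v : 'I_c) := nth w0 (enum (Wj j)) v.
have startP (i : 'I_n) : (i %/ m * m < n)%N := leq_ltn_trans (leq_divM i m) (ltn_ord i).
have blockP (i : 'I_n) : (i %/ m < (n %/ m).+1)%N by rewrite ltnS leq_div2r // ltnW.
pose Psi (uv : {ffun 'I_n -> 'I_r} * {ffun 'I_(n %/ m).+1 -> 'I_c}) : {ffun 'I_n -> 'I_k} :=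
  [ffun i : 'I_n => code (uv.1 (Ordinal (startP i))) (uv.2 (Ordinal (blockP i)))
                         (Ordinal (ltn_pmod i m0))].
exists (Psi @: finset.setX WH [set: {ffun 'I_(n %/ m).+1 -> 'I_c}]%SET).
  by apply: leq_trans (leq_imset_card _ _) _; rewrite cardsX cardsT card_ffun !card_ord.
move=> y Ky; have [u uWH yu] := XWH (pr y) I.
have /choice[v vP] : forall l : 'I_(n %/ m).+1, exists v : 'I_c, forall i : 'I_n,
    (i %/ m)%N = l -> join_set T V (code (u (Ordinal (startP i))) v) (iter (i %/ m * m) T y).
  move=> l; case: (pselect (exists i : 'I_n, (i %/ m)%N = l)) => [[i0 i0l]|no]; last first.
    by exists (Ordinal c0) => i il; case: no; exists i.
  set j := u (Ordinal (startP i0)).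
  have Uj : U j (pr (iter (i0 %/ m * m) T y)) by rewrite pr_iter //; exact: yu.
  have [w wW yw] := Wj_cover _ _ (conj (iter_invariant T_K _ Ky) Uj).
  have wc : (index w (enum (Wj j)) < c)%N.
    by apply: leq_trans (Wj_card j); rewrite cardE index_mem mem_enum.
  exists (Ordinal wc) => i il.
  have -> : Ordinal (startP i) = Ordinal (startP i0) by apply: val_inj => /=; rewrite il i0l.
  by rewrite il -i0l /code /= nth_index ?mem_enum.
exists (Psi (u, [ffun l => v l])).
  by apply/imsetP; exists (u, [ffun l => v l]); rewrite // !inE /= uWH.
move=> i; rewrite !ffunE /=.
have := vP (Ordinal (blockP i)) i erefl (Ordinal (ltn_pmod i m0)).
by rewrite -iterD /= addnC -divn_eq.
Qed.

Lemma cover_number_le_mul n : [set: X] `<=` \bigcup_j U j ->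
  cover_number (R:=R) K T V n <= cover_number [set: X] H U n * (c ^ (n %/ m).+1)%:R.
Proof.
move=> XU; have c_pos : 0 < (c ^ (n %/ m).+1)%:R :> R by rewrite ltr0n expn_gt0 c0.
rewrite -ler_pdivrMr //; apply: cover_number_ge.
  by eexists; apply: join_cover_setT.
move=> WH XWH; have [WT WTc KWT] := join_cover_concat XWH.
by rewrite ler_pdivrMr //; apply: le_trans (cover_number_le KWT) _; rewrite -natrM ler_nat.
Qed.

Lemma ln_cover_number_le n y0 : K y0 -> K `<=` \bigcup_i V i ->
  [set: X] `<=` \bigcup_j U j ->
  ln (cover_number (R:=R) K T V n) <=
    ln (cover_number [set: X] H U n) + (n %/ m).+1%:R * ln (c%:R).
Proof.
move=> Ky0 KV XU; have NT1 := cover_number_ge1 (R:=R) T_K V n Ky0 KV.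
have NH1 := cover_number_ge1 (R:=R) (T:=H) (fun _ _ => I) U n (I : [set: X] (pr y0)) XU.
have NH0 := lt_le_trans ltr01 NH1; have c_pos : (0 < c ^ (n %/ m).+1)%N by rewrite expn_gt0 c0.
rewrite mulr_natl -lnXn ?ltr0n // -natrX -lnM ?posrE ?ltr0n //.
rewrite ler_ln ?posrE ?mulr_gt0 ?ltr0n ?(lt_le_trans ltr01) //.
exact: cover_number_le_mul.
Qed.

End Concatenation.

Hypothesis pr_onto : forall x, exists2 p, K p & pr p = x.

Lemma cover_number_preimage {k} (U : 'I_k -> set X) n :
  cover_number (R:=R) K T (fun j => pr @^-1` U j) n = cover_number [set: X] H U n.
Proof.
congr (inf [set _ | _ in _]); apply/seteqP; split => W WU.
- move=> x _; have [p Kp <-] := pr_onto x; have [w wW pw] := WU p Kp.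
  by exists w => // i; rewrite -pr_iter //; exact: pw.
- move=> p Kp; have [w wW xw] := WU (pr p) I.
  by exists w => // i; rewrite /preimage /= pr_iter //; exact: xw.
Qed.

Lemma top_entropy_le_extension : continuous pr ->
  (top_entropy (R:=R) [set: X] H <= top_entropy K T)%E.
Proof.
move=> pr_cont; apply: ereal_sup_le => _ [k [U [Uo XU ->]]].
exists k, (fun j => pr @^-1` U j); split.
- by move=> j; apply: open_comp => // p _; exact: pr_cont.
- by move=> p _; have [j _ Uj] := XU (pr p) I; exists j.
- by congr limn_esup; apply/funext => n; rewrite cover_number_preimage.
Qed.

End Extension.

(** * Compact sets and covers *)

Lemma compact_tube {X Y : topologicalType} {K G : set Y} {pr : Y -> X} {x} :
  hausdorff_space X -> closed K -> compact K -> continuous pr ->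
  (forall q, K q -> G q -> nbhs q [set q' | K q' -> G q']) ->
  (forall q, K q -> pr q = x -> G q) ->
  exists O, [/\ open O, O x & forall q, K q -> O (pr q) -> G q].
Proof.
move=> hX Kcl Kco pr_cont G_nbhs Gx; pose B := K `&` ~` G.
have Bcl : closed B.
  rewrite -openC openE => q nBq; case: (pselect (K q)) => Kq.
    have Gq : G q by apply: contrapT => nGq; exact: nBq.
    by apply: filterS (G_nbhs q Kq Gq) => q' Gq' [Kq']; apply; exact: Gq'.
  have : nbhs q (~` K) by apply: open_nbhs_nbhs; split => //; exact: closed_openC.
  by apply: filterS => q' nKq' [].
have prBcl : closed (pr @` B).
  apply: compact_closed => //; apply: continuous_compact.
    exact: continuous_subspaceT.
  by apply: subclosed_compact Bcl Kco _; exact: subIsetl.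
exists (~` (pr @` B)); split; first exact: closed_openC.
  by move=> [q [Kq nGq] qx]; exact: nGq (Gx q Kq qx).
by move=> q Kq nBq; apply: contrapT => nGq; apply: nBq; exists q.
Qed.

Lemma compact_vertical_lebesgue {X : topologicalType} {R : realType} {K : set (X * R)}
    {k} {V : 'I_k -> set (X * R)} :
  compact K -> (forall i, open (V i)) -> K `<=` \bigcup_i V i ->
  exists2 d : R, 0 < d &
    forall q, K q -> exists i, forall s, `|s - q.2| < d -> V i (q.1, s).
Proof.
move=> /compact_near_coveringP Kcov Vo KV.
have : \forall d \near 0^'+, K `<=`
    [set q | exists i, forall s, `|s - q.2| < d -> V i (q.1, s)].
  apply: Kcov => p Kp; have [i _ Vip] := KV p Kp.
  have [[A B] /= [pA pB] AB] : nbhs p (V i) by apply: open_nbhs_nbhs.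
  move/nbhs_ballP : pB => [r /= r0 rB]; have r20 : 0 < r / 2 by rewrite divr_gt0.
  exists ([set q | A q.1 /\ `|q.2 - p.2| < r / 2], [set d | 0 < d < r / 2]) => /=.
    split; last first.
      exists (r / 2) => // d /=; rewrite /ball /= sub0r normrN => /ltr_normlW dr d0.
      by rewrite d0.
    exists (A, ball p.2 (r / 2)) => /=; first by split; [|exact: nbhsx_ballx].
    by move=> [z s] [/= Az zs]; split => //; move: zs; rewrite /ball /= distrC.
  case=> q d /= [[Aq qp] /andP[_ dr]]; exists i => s sq.
  apply: (AB (q.1, s)); split => //=; apply: rB; rewrite /ball /= distrC.
  by have := ler_distD q.2 s p.2; lra.
move=> /(filterI (nbhs_right_gt 0))/filter_ex[d [d0 dK]].
by exists d.
Qed.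

Definition cell {R : realType} (c s : R) : nat := Num.truncn (s * c).

Lemma cell_le {R : realType} (c s t : R) : 0 <= c -> s <= t -> (cell c s <= cell c t)%N.
Proof. by move=> c0 st; apply: le_truncn; rewrite ler_wpM2r. Qed.

Lemma cell_eq_dist {R : realType} (c s t : R) : 0 < c -> 0 <= s -> 0 <= t ->
  cell c s = cell c t -> `|s - t| < c^-1.
Proof.
move=> c0 s0 t0 st.
have /andP[s1 s2] := truncn_itv (mulr_ge0 s0 (ltW c0)).
have /andP[t1 t2] := truncn_itv (mulr_ge0 t0 (ltW c0)).
rewrite /cell in st; rewrite st -natr1 in s1 s2; rewrite -natr1 in t2.
rewrite -div1r ltr_pdivlMr // -[c]gtr0_norm // -normrM mulrBl ltr_norml.
by apply/andP; split; lra.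
Qed.

Lemma compact_cell_coloring {X : topologicalType} {R : realType} {K : set (X * R)}
    {k} {V : 'I_k -> set (X * R)} :
  (0 < k)%N -> compact K -> (forall i, open (V i)) -> K `<=` \bigcup_i V i ->
  (forall q, K q -> 0 <= q.2) ->
  exists2 c : R, 0 < c &
    exists col : X -> nat -> 'I_k, forall q, K q -> V (col q.1 (cell c q.2)) q.
Proof.
move=> k0 Kco Vo KV K_ge0; have [d d0 dV] := compact_vertical_lebesgue Kco Vo KV.
exists d^-1; first by rewrite invr_gt0.
have /choice[col colP] : forall z, exists f : nat -> 'I_k,
    forall s, K (z, s) -> V (f (cell d^-1 s)) (z, s).
  move=> z; have /choice[f fP] : forall a, exists i : 'I_k,
      forall s, K (z, s) -> cell d^-1 s = a -> V i (z, s).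
    move=> a; case: (pselect (exists2 s0, K (z, s0) & cell d^-1 s0 = a)); last first.
      by move=> no; exists (Ordinal k0) => s Ks sa; case: no; exists s.
    move=> [s0 Ks0 s0a]; have [i iV] := dV _ Ks0; exists i => s Ks sa; apply: iV.
    rewrite -[d]invrK; apply: cell_eq_dist; rewrite ?invr_gt0 ?sa //.
      exact: (K_ge0 _ Ks).
    exact: (K_ge0 _ Ks0).
  by exists f => s Ks; exact: fP.
by exists col => -[z s] Kq; exact: colP.
Qed.

(** * Fences *)

Lemma lsc_closed_epigraph {X : topologicalType} {R : realType} {f : X -> R} :
  lsc f -> closed [set p : X * R | f p.1 <= p.2].
Proof.
move=> f_lsc; rewrite -openC openE => -[x t] /= /negP; rewrite -ltNge => /midf_lt[ta af].
have [V xV Vf] := f_lsc x _ af.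
exists (V, [set s | s < (t + f x) / 2]) => /=.
  by split => //; apply: open_nbhs_nbhs; split; [exact: open_lt|].
by move=> [z s] /= [Vz sa]; have := lt_trans sa (Vf z Vz); rewrite ltNge => /negP.
Qed.

Lemma usc_closed_hypograph {X : topologicalType} {R : realType} {f : X -> R} :
  usc f -> closed [set p : X * R | p.2 <= f p.1].
Proof.
move=> f_usc; rewrite -openC openE => -[x t] /= /negP; rewrite -ltNge => /midf_lt[fa ta].
have [V xV Vf] := f_usc x _ fa.
exists (V, [set s | (f x + t) / 2 < s]) => /=.
  by split => //; apply: open_nbhs_nbhs; split; [exact: open_gt|].
by move=> [z s] /= [Vz sa]; have := lt_trans (Vf z Vz) sa; rewrite ltNge => /negP.
Qed.

Section Fence.
Variable R : realType.
Local Notation X := cantor_space.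
Variables (phiL phiU : X -> R) (HX : X -> X) (T : X * R -> X * R).
Local Notation F := (fence phiL phiU).
Hypotheses (phiL_ge0 : forall x, 0 <= phiL x) (phiU_le1 : forall x, phiU x <= 1).
Hypotheses (phiL_lsc : lsc phiL) (phiU_usc : usc phiU) (phiLU : forall x, phiL x <= phiU x).
Hypotheses (T_lift : forall p, F p -> (T p).1 = HX p.1 /\ F (T p))
  (T_cont : {within F, continuous T})
  (T_fiber_inj : forall p q, F p -> F q -> p.1 = q.1 -> T p = T q -> p = q).

Let fence_T p : F p -> F (T p). Proof. by case/T_lift. Qed.
Let fst_T p : F p -> (T p).1 = HX p.1. Proof. by case/T_lift. Qed.
Let fst_iter i {p} (Fp : F p) : (iter i T p).1 = iter i HX p.1 :=
  pr_iter fence_T fst_T i Fp.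
Let fst_continuous : continuous (fst : X * R -> X). Proof. by move=> q; exact: cvg_fst. Qed.

Lemma fence_phiL x : F (x, phiL x).
Proof. by split => /=. Qed.

Lemma fence_ge0 p : F p -> 0 <= p.2.
Proof. by case=> Lp _; exact: le_trans (phiL_ge0 _) Lp. Qed.

Lemma fence_le1 p : F p -> p.2 <= 1.
Proof. by case=> _ pU; exact: le_trans pU (phiU_le1 _). Qed.

Lemma fence_closed : closed F.
Proof. exact: closedI (lsc_closed_epigraph phiL_lsc) (usc_closed_hypograph phiU_usc). Qed.

Lemma fence_compact : compact F.
Proof.
apply: (subclosed_compact fence_closed (B := [set: X] `*` `[0 : R, 1])).
  apply: compact_setX; [exact: cantor_space_compact | exact: segment_compact].
by move=> p Fp; split => //=; rewrite in_itv /= fence_ge0 ?fence_le1.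
Qed.

Lemma in_fence_fiber x t : F (x, t) <-> t \in `[phiL x, phiU x].
Proof. by rewrite in_itv; split => [[/= -> ->]|/andP[]]. Qed.

Lemma fiber_continuous x : {within `[phiL x, phiU x], continuous (fun t => (T (x, t)).2)}.
Proof.
apply/subspace_continuousP => t /in_fence_fiber Fxt B TB.
have : nbhs (T (x, t)) [set q | B q.2] by exact: cvg_snd.
case/(T_nbhs T_cont Fxt) => -[A1 A2] /= [xA1 tA2] A12.
apply: filterS tA2 => s sA2 /in_fence_fiber Fxs.
by apply: (A12 (x, s)) => //; split => //=; exact: nbhs_singleton.
Qed.

Lemma fiber_monotone x : monotone_on `[phiL x, phiU x] (fun t => (T (x, t)).2).
Proof.
have fiber_inj : {in `[phiL x, phiU x] &, injective (fun t => (T (x, t)).2)}.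
  move=> s t /in_fence_fiber Fxs /in_fence_fiber Fxt st.
  have : T (x, s) = T (x, t).
    by rewrite [T (x, s)]surjective_pairing [T (x, t)]surjective_pairing !fst_T // st.
  by case/(T_fiber_inj _ _ Fxs Fxt erefl).
case: (itv_continuous_inj_mono (fiber_continuous x) fiber_inj) => h; [left|right].
  exact: ltW_homo_in.
by move=> s t sI tI; apply: (ltW_nhomo_in h).
Qed.

Lemma iter_fiber_monotone j x :
  monotone_on `[phiL x, phiU x] (fun t => (iter j T (x, t)).2).
Proof.
elim: j x => [|j IH] x; first by left.
have fiber_to t : t \in `[phiL x, phiU x] -> (T (x, t)).2 \in `[phiL (HX x), phiU (HX x)].
  move=> /in_fence_fiber Fxt; have := fence_T _ Fxt.
  by rewrite [T _]surjective_pairing fst_T // => /in_fence_fiber.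
apply: monotone_on_eq (monotone_on_comp fiber_to (fiber_monotone x) (IH (HX x))).
by move=> t /in_fence_fiber Fxt; rewrite iterSr [T (x, t)]surjective_pairing fst_T.
Qed.

Lemma fiber_join_cover {k} (V : 'I_k -> set (X * R)) (c : R) (col : X -> nat -> 'I_k) m x :
  0 < c -> (forall q, F q -> V (col q.1 (cell c q.2)) q) ->
  exists2 W : {set {ffun 'I_m -> 'I_k}}, (#|W| <= m * cell c 1 + 1)%N &
    forall t, F (x, t) -> exists2 w, w \in W & join_set T V w (x, t).
Proof.
move=> c0 colP; pose g (j : 'I_m) t := cell c (iter j T (x, t)).2.
have [s s_size s_g] : exists2 s : seq {ffun 'I_m -> nat}, (size s <= m * cell c 1 + 1)%N &
    {in `[phiL x, phiU x], forall t, [ffun j => g j t] \in s}.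
  apply: monotone_profiles_count => j.
    case: (iter_fiber_monotone j x) => g_mono; [left|right] => s t sI tI st;
      by apply: cell_le (ltW c0) _; exact: g_mono.
  move=> t /in_fence_fiber Fxt; apply: cell_le (ltW c0) _.
  exact/fence_le1/(iter_invariant fence_T).
pose word (v : {ffun 'I_m -> nat}) : {ffun 'I_m -> 'I_k} :=
  [ffun j : 'I_m => col (iter j HX x) (v j)].
exists [set w in map word s]%SET.
  by rewrite cardsE (leq_trans (card_size _)) // size_map.
move=> t Fxt; exists (word [ffun j => g j t]).
  by rewrite inE map_f // s_g // -in_fence_fiber.
by move=> j; rewrite !ffunE -(fst_iter j Fxt); exact/colP/(iter_invariant fence_T).
Qed.

Lemma fence_local_join_cover {k} (V : 'I_k -> set (X * R)) (c : R) (col : X -> nat -> 'I_k)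
    m x :
  (forall i, open (V i)) -> 0 < c -> (forall q, F q -> V (col q.1 (cell c q.2)) q) ->
  exists OW : set X * {set {ffun 'I_m -> 'I_k}}, [/\ open OW.1, OW.1 x,
    (#|OW.2| <= m * cell c 1 + 1)%N & join_cover (F `&` fst @^-1` OW.1) T V m OW.2].
Proof.
move=> Vo c0 colP; have [W W_card W_fiber] := fiber_join_cover V c col m x c0 colP.
have [A [Ao xA AW]] : exists A, [/\ open A, A x &
    forall q, F q -> A q.1 -> exists2 w, w \in W & join_set T V w q].
  apply: compact_tube cantor_space_hausdorff fence_closed fence_compact fst_continuous _ _.
    move=> q Fq [w wW qw]; apply: filterS (join_set_nbhs fence_T T_cont Vo Fq qw).
    by move=> q' q'w Fq'; exists w => //; exact: q'w.
  by move=> [z s] Fq /= zx; rewrite zx in Fq *; exact: W_fiber.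
by exists (A, W); split => // q [Fq Aq]; exact: AW.
Qed.

Lemma fence_base_cover {k} (V : 'I_k -> set (X * R)) (c : R) (col : X -> nat -> 'I_k) m :
  (forall i, open (V i)) -> 0 < c -> (forall q, F q -> V (col q.1 (cell c q.2)) q) ->
  exists r (U : 'I_r -> set X) (Wj : 'I_r -> {set {ffun 'I_m -> 'I_k}}),
    [/\ forall j, open (U j), [set: X] `<=` \bigcup_j U j,
        forall j, (#|Wj j| <= m * cell c 1 + 1)%N &
        forall j, join_cover (F `&` fst @^-1` U j) T V m (Wj j)].
Proof.
move=> Vo c0 colP.
have [OW OWP] := choice (fun x => fence_local_join_cover V c col m x Vo c0 colP).
have := cantor_space_compact; rewrite compact_cover.
case/(_ _ [set: X] (fun x => (OW x).1)) => [x _|x _|D _ XD].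
- by have [] := OWP x.
- by exists x => //; have [] := OWP x.
pose s := finmap.enum_fset D.
exists (size s), (fun j => (OW (nth point s j)).1), (fun j => (OW (nth point s j)).2).
split => [j|x _|j|j]; try by have [] := OWP (nth point s j).
have [y Dy Oy] := XD x I; have ys : y \in s by [].
have ys_idx : (index y s < size s)%N by rewrite index_mem.
by exists (Ordinal ys_idx); rewrite //= nth_index.
Qed.

Lemma cover_entropy_fence_le {k} (V : 'I_k -> set (X * R)) :
  (forall i, open (V i)) -> F `<=` \bigcup_i V i ->
  (cover_entropy (R:=R) F T V <= top_entropy [set: X] HX)%E.
Proof.
move=> Vo FV; have [i0 _ _] := FV _ (fence_phiL point).
have k0 : (0 < k)%N := leq_ltn_trans (leq0n _) (ltn_ord i0).
have [c c0 [col colP]] := compact_cell_coloring k0 fence_compact Vo FV fence_ge0.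
apply/lee_addgt0Pr => eps eps0; have eps20 : 0 < eps / 2 by rewrite divr_gt0.
have [m m0 m_ln] := exists_ln_affine_le (cell c 1) eps20.
have [r [U [Wj [Uo XU Wj_card Wj_cover]]]] := fence_base_cover V c col m Vo c0 colP.
have UH : (cover_entropy (R:=R) [set: X] HX U <= top_entropy [set: X] HX)%E.
  by apply: ereal_sup_ubound; exists r, U; split.
apply: (@le_trans _ _ (cover_entropy (R:=R) [set: X] HX U + eps%:E)%E); last first.
  by rewrite leeD2r.
apply: limn_esup_le_add.
set lb := ln _ in m_ln.
exists (Num.truncn (lb / (eps / 2))).+1 => // n /= Nn; rewrite lee_fin.
have n0 : 0 < n%:R :> R by rewrite ltr0n (leq_trans _ Nn).
rewrite ler_pdivrMr // mulrDl divfK ?gt_eqF //.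
have b0 : (0 < m * cell c 1 + 1)%N by rewrite addn1.
have NT_NH := ln_cover_number_le (R:=R) fence_T fst_T k0 m0 b0 Wj_card Wj_cover n _
  (fence_phiL point) FV XU.
apply: le_trans NT_NH _.
rewrite lerD2l -natr1 mulrDl mul1r.
have qm : (n %/ m)%:R * m%:R <= n%:R :> R by rewrite -natrM ler_nat leq_divM.
have lbn : lb <= eps / 2 * n%:R.
  have := truncnS_gt (lb / (eps / 2)); rewrite ltr_pdivrMr // => /ltW/le_trans; apply.
  by rewrite mulrC ler_wpM2l ?(ltW eps20) // ler_nat.
have qlb : (n %/ m)%:R * lb <= eps / 2 * n%:R.
  apply: le_trans (ler_wpM2l (ler0n _ _) m_ln) _.
  by rewrite mulrCA ler_wpM2l // ltW.
by rewrite (splitr eps) mulrDl lerD.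
Qed.

Lemma fence_top_entropy : top_entropy (R:=R) F T = top_entropy [set: X] HX.
Proof.
apply/le_anti/andP; split.
  by apply: ge_ereal_sup => _ [k [V [Vo FV ->]]]; exact: cover_entropy_fence_le.
apply: (top_entropy_le_extension fence_T fst_T) => // x.
by exists (x, phiL x); first exact: fence_phiL.
Qed.

End Fence.

Theorem proposition3p2 (R : realType) (phiL phiU : cantor_space -> R)
  (HX : cantor_space -> cantor_space) (T : cantor_space * R -> cantor_space * R) :
  (forall x, 0 <= phiL x <= 1) -> (forall x, 0 <= phiU x <= 1) ->
  lsc phiL -> usc phiU -> (forall x, phiL x <= phiU x) ->
  continuous HX -> (forall y, exists x, HX x = y) ->
  (* T maps the fence to itself and is a lifting of HX *)
  (forall p, fence phiL phiU p ->
     (T p).1 = HX p.1 /\ fence phiL phiU (T p)) ->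
  {within fence phiL phiU, continuous T} ->
  (* restriction of T to each fiber {x} x F(x) is a homeomorphism onto its image *)
  (forall x, let Fx := [set p | p.1 = x /\ fence phiL phiU p] in
     [/\ {within Fx, continuous T},
         (forall p q, Fx p -> Fx q -> T p = T q -> p = q) &
         exists S : cantor_space * R -> cantor_space * R,
           (forall p, Fx p -> S (T p) = p) /\ {within T @` Fx, continuous S}]) ->
  top_entropy (R:=R) (fence phiL phiU) T = top_entropy (R:=R) [set: cantor_space] HX.
Proof.
move=> phiL01 phiU01 phiL_lsc phiU_usc phiLU _ _ T_lift T_cont T_fiber.
apply: fence_top_entropy => // [x|x|p q Fp Fq pq Tpq].
- by case/andP: (phiL01 x).
- by case/andP: (phiU01 x).
- by case: (T_fiber q.1) => _ T_inj _; apply: T_inj => //; split.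
Qed.
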